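(* Fix a sample size $n\ge 2$, a bag size $m\ge1$ (with $m\le n-1$ in the subbagging case), and $\varepsilon>0$. For any (deterministic, measurable) base learning algorithm $\mathcal{A}$ with outputs in $\Delta_{L-1}$, the classification algorithm $\mathcal{C}=\mathrm{argmax}^\varepsilon\circ\widetilde{\mathcal{A}}_m$, i.e. $\mathcal{C}(\mathcal{D},x)=\mathrm{argmax}^\varepsilon\big(\widetilde{\mathcal{A}}_m(\mathcal{D})(x)\big)$, has selection stability $\delta$ at sample size $n$, where $$\delta=\varepsilon^{-2}\cdot\frac{1-1/L}{n-1}\cdot\frac{p_{n,m}}{1-p_{n,m}},$$ with $p_{n,m}=1-(1-1/n)^m$ for bootstrapping and $p_{n,m}=m/n$ for subbagging.
   Context: Feature space $\mathcal{X}$, labels $[L]=\{1,\dots,L\}$, simplex $\Delta_{L-1}=\{w\in\mathbb{R}^L:w_i\ge0,\sum_iw_i=1\}$, $\|\cdot\|$ Euclidean norm. A learning algorithm $\mathcal{A}$ maps any data set $\mathcal{D}\in\bigcup_{n\ge0}(\mathcal{X}\times[L])^n$ to a function $\mathcal{A}(\mathcal{D}):\mathcal{X}\to\Delta_{L-1}$. For a data set $\mathcal{D}=((X_i,Y_i))_{i\in[N]}$ of size $N$ and a sequence $r=(i_1,\dots,i_m)\in[N]^m$, $\mathcal{D}^r=((X_{i_1},Y_{i_1}),\dots,(X_{i_m},Y_{i_m}))$. The bagged algorithm is $\widetilde{\mathcal{A}}_m(\mathcal{D})(x)=\mathbb{E}_r[\mathcal{A}(\mathcal{D}^r)(x)]$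 (exact expectation), where for bootstrapping $r$ consists of $m$ indices drawn uniformly with replacement from $[N]$, and for subbagging $r$ consists of $m\le N$ indices drawn uniformly without replacement from $[N]$. Inflated argmax: for $j\in[L]$ let $R_j^\varepsilon=\{w\in\mathbb{R}^L: w_j\ge\max_{\ell\neq j}w_\ell+\varepsilon/\sqrt2\}$ and $\mathrm{argmax}^\varepsilon(w)=\{j\in[L]:\mathrm{dist}(w,R_j^\varepsilon)<\varepsilon\}$, with $\mathrm{dist}(w,R)=\inf_{v\in R}\|w-v\|$. For $\mathcal{D}=((X_j,Y_j))_{j\in[n]}$, $\mathcal{D}^{\setminus i}$ is $\mathcal{D}$ with the $i$th point removed. A classification algorithm $\mathcal{C}$ (mapping $(\mathcal{D},x)$ to a subset of $[L]$) has selection stability $\delta$ at sample size $n$ if for all $\mathcal{D}\in(\mathcal{X}\times[L])^n$ and all $x\in\mathcal{X}$, $\frac1n\sum_{i=1}^n\mathbf{1}\{\mathcal{C}(\mathcal{D},x)\cap\mathcal{C}(\mathcal{D}^{\setminus i},x)=\varnothing\}\le\delta$. *)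

From HB Require Import structures.
From mathcomp Require Import all_boot all_order all_algebra.
From mathcomp Require Import boolp classical_sets reals.
Set Implicit Arguments. Unset Strict Implicit. Unset Printing Implicit Defensive.
Import Order.TTheory GRing.Theory Num.Theory.
Local Open Scope ring_scope.

Section Defs.
Variables (R : realType) (X : Type) (L : nat).

Definition dataset := seq (X * 'I_L).

Definition in_simplex (w : 'I_L -> R) : Prop :=
  (forall i, 0 <= w i) /\ \sum_(i < L) w i = 1.

Definition eucl_dist (w v : 'I_L -> R) : R :=
  Num.sqrt (\sum_(i < L) (w i - v i) ^+ 2).

Definition Rreg (eps : R) (j : 'I_L) : set ('I_L -> R) :=
  [set v | forall l : 'I_L, l != j -> v l + eps / Num.sqrt 2 <= v j].

Definition dist_set (w : 'I_L -> R) (S : set ('I_L -> R)) : R :=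
  inf [set d | exists2 v, S v & d = eucl_dist w v].

Definition argmax_eps (eps : R) (w : 'I_L -> R) : set 'I_L :=
  [set j | dist_set w (Rreg eps j) < eps].

Definition subsample (D : dataset) (m : nat) (r : 'I_m -> 'I_(size D)) : dataset :=
  [seq tnth (in_tuple D) (r i) | i <- enum 'I_m].

Inductive bag_scheme := Bootstrap | Subbagging.

(* Bootstrapping: r uniform over all of [N]^m (with replacement);
   Subbagging: r uniform over the injective sequences in [N]^m (without replacement). *)
Definition bagged (s : bag_scheme) (A : dataset -> X -> 'I_L -> R) (m : nat)
  (D : dataset) (x : X) : 'I_L -> R :=
  fun j =>
  match s with
  | Bootstrap =>
      ((size D)%:R ^+ m)^-1 *
        \sum_(r : {ffun 'I_m -> 'I_(size D)}) A (subsample r) x j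
  | Subbagging =>
      (#|[pred r : {ffun 'I_m -> 'I_(size D)} | injectiveb r]|%:R)^-1 *
        \sum_(r : {ffun 'I_m -> 'I_(size D)} | injectiveb r) A (subsample r) x j
  end.

Definition remove_at (D : dataset) (i : nat) : dataset := take i D ++ drop i.+1 D.

Definition selection_stable (C : dataset -> X -> set 'I_L) (delta : R) (n : nat) : Prop :=
  forall D : dataset, size D = n -> forall x : X,
    (n%:R)^-1 *
      #|[set i : 'I_n | `[< ~ exists j, C D x j /\ C (remove_at D i) x j >]]|%:R
      <= delta.

End Defs.

Definition p_nm (R : realType) (s : bag_scheme) (n m : nat) : R :=
  match s with
  | Bootstrap => 1 - (1 - (n%:R)^-1) ^+ m
  | Subbagging => m%:R / n%:R
  end.

(* If |w - v| < eps then argmax^eps(w) and argmax^eps(v) intersect: otherwise the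
   largest coordinates of w and of v lying outside their own inflated argmax are
   both far from the regions R_j, and the two deficits add up to |w - v|^2 >= eps^2
   because eps^2 = 2 (eps / sqrt 2)^2.  Hence each unstable index i contributes at
   least eps^2 to S = sum_i |A~(D) - A~(D^{\i})|^2, and it suffices to bound S by
   p/(1-p) * n/(n-1) * (1 - 1/L).
   Regard a bag r as drawn uniformly.  A~(D^{\i}) is the mean of Y(r) = A(D^r)
   over the bags avoiding i, so A~(D) - A~(D^{\i}) = Cov(Y, Z_i) / (1 - p) with
   Z_i = (1 - p) - 1{r avoids i}.  The Z_i have variance p(1 - p) and pairwise
   covariance kappa <= 0, so their Gram matrix has norm at most p(1 - p) - kappa
   <= p(1 - p) n/(n-1); by duality sum_i Cov(Y, Z_i)^2 is at most this norm
   times Var(Y), and Var(Y) <= 1 - 1/L for simplex-valued Y. *)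

From HB Require Import structures.
From mathcomp Require Import all_boot all_order all_algebra.
From mathcomp Require Import ring lra zify.
From mathcomp Require Import boolp classical_sets reals.
Import Order.TTheory GRing.Theory Num.Theory.
Local Open Scope ring_scope.
Set Implicit Arguments. Unset Strict Implicit. Unset Printing Implicit Defensive.

Lemma sum_indicator (R : nzSemiRingType) (T : finType) (P Q : pred T) (F : T -> R) :
  \sum_(r | P r) (Q r)%:R * F r = \sum_(r | P r && Q r) F r.
Proof. by rewrite big_mkcondr /=; apply: eq_bigr => r _; case: (Q r); rewrite ?mul1r ?mul0r. Qed.

Lemma sum1_card (R : nzSemiRingType) (T : finType) (P : pred T) : \sum_(r | P r) (1 : R) = #|P|%:R.
Proof. by rewrite sumr_const. Qed.

Lemma sum_sq_le_sqr_sum (R : numDomainType) (I : finType) (f : I -> R) :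
  (forall i, 0 <= f i) -> \sum_i f i ^+ 2 <= (\sum_i f i) ^+ 2.
Proof.
move=> f_ge0; rewrite [leRHS]expr2 mulr_suml; apply: ler_sum => i _.
by rewrite expr2 ler_wpM2l // (bigD1 i) //= lerDl sumr_ge0.
Qed.

Lemma card_mul_le_sum (R : numDomainType) (I : finType) (B : {set I}) (f : I -> R) c :
  (forall i, 0 <= f i) -> (forall i, i \in B -> c <= f i) -> #|B|%:R * c <= \sum_i f i.
Proof.
move=> f_ge0 f_ge; have -> : #|B|%:R * c = \sum_(i in B) c by rewrite sumr_const mulr_natl.
rewrite [leRHS](bigID (mem B)) /= -[leLHS]addr0.
by apply: lerD; [exact: ler_sum | exact: sumr_ge0].
Qed.

Lemma in_simplex_dim_gt0 (R : realType) (L : nat) (w : 'I_L -> R) :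
  in_simplex w -> (0 < L)%N.
Proof.
case=> _ w_sum; rewrite lt0n; apply/eqP => L0; subst L.
by move: w_sum; rewrite big_ord0 => /eqP; rewrite eq_sym oner_eq0.
Qed.

Section Averages.
Variables (R : realFieldType) (T : finType) (P : pred T).

Definition mass : R := \sum_(r | P r) 1.

Definition mean (y : T -> R) : R := mass^-1 * \sum_(r | P r) y r.

Lemma sum_const_mass (c : R) : \sum_(r | P r) c = c * mass.
Proof. by rewrite /mass mulr_sumr; apply: eq_bigr => r _; rewrite mulr1. Qed.

Lemma sum_eq_mass_mean (y : T -> R) : 0 < mass -> \sum_(r | P r) y r = mass * mean y.
Proof. by move=> m_gt0; rewrite /mean mulrA mulfV ?mul1r // gt_eqF. Qed.

Lemma sum_dev_sq (y : T -> R) : 0 < mass ->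
  \sum_(r | P r) (y r - mean y) ^+ 2 = \sum_(r | P r) y r ^+ 2 - mass * mean y ^+ 2.
Proof.
move=> m_gt0.
have -> : \sum_(r | P r) (y r - mean y) ^+ 2 =
    \sum_(r | P r) (y r ^+ 2 - 2 * mean y * y r + mean y ^+ 2).
  by apply: eq_bigr => r _; ring.
rewrite big_split /= sumrB sum_const_mass -mulr_sumr (sum_eq_mass_mean y) //; ring.
Qed.

Lemma sum_sq_inner_le (n : nat) (Z : 'I_n -> T -> R) (M : R) (y : T -> R) :
  0 < M ->
  (forall a : 'I_n -> R, \sum_(r | P r) (\sum_i a i * Z i r) ^+ 2 <= M * \sum_i a i ^+ 2) ->
  \sum_i (\sum_(r | P r) y r * Z i r) ^+ 2 <= M * \sum_(r | P r) y r ^+ 2.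
Proof.
move=> M_gt0 frameZ.
pose e i := \sum_(r | P r) y r * Z i r.
pose V r := \sum_i e i * Z i r.
pose S := \sum_i e i ^+ 2.
have S_inner : S = \sum_(r | P r) y r * V r.
  rewrite /S /V; under eq_bigr => i _ do rewrite expr2 {2}/e mulr_sumr.
  rewrite exchange_big /=; apply: eq_bigr => r _.
  by rewrite mulr_sumr; apply: eq_bigr => i _; ring.
have V_le : \sum_(r | P r) V r ^+ 2 <= M * S := frameZ e.
(* Weighted AM-GM: [2 M S = 2 M <y, V> <= M^2 |y|^2 + |V|^2 <= M^2 |y|^2 + M S]. *)
have amgm r : 2 * M * (y r * V r) <= M ^+ 2 * y r ^+ 2 + V r ^+ 2.
  have := sqr_ge0 (M * y r - V r).
  have -> : (M * y r - V r) ^+ 2 = M ^+ 2 * y r ^+ 2 + V r ^+ 2 - 2 * M * (y r * V r) by ring.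
  lra.
have : 2 * M * S <= M ^+ 2 * \sum_(r | P r) y r ^+ 2 + M * S.
  rewrite {1}S_inner mulr_sumr mulr_sumr; apply: le_trans (lerD (lexx _) V_le).
  by rewrite -big_split /=; apply: ler_sum => r _; exact: amgm.
have -> : M ^+ 2 * \sum_(r | P r) y r ^+ 2 = M * (M * \sum_(r | P r) y r ^+ 2) by ring.
move=> h; have : M * S <= M * (M * \sum_(r | P r) y r ^+ 2) by lra.
by rewrite ler_pM2l.
Qed.

Lemma sum_sq_simplex_le1 (L : nat) (w : 'I_L -> R) :
  (forall j, 0 <= w j) -> \sum_j w j = 1 -> \sum_j w j ^+ 2 <= 1.
Proof.
move=> w_ge0 w_sum; rewrite -[leRHS]w_sum; apply: ler_sum => j _.
have wj_le1 : w j <= 1 by rewrite -w_sum (bigD1 j) //= lerDl sumr_ge0.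
by have := w_ge0 j; rewrite expr2; nra.
Qed.

Lemma invn_le_sum_sq (L : nat) (w : 'I_L -> R) :
  (0 < L)%N -> \sum_j w j = 1 -> L%:R^-1 <= \sum_j w j ^+ 2.
Proof.
move=> L_gt0 w_sum; have L_neq0 : (L%:R : R) != 0 by rewrite pnatr_eq0 -lt0n.
have : 0 <= \sum_j (w j - L%:R^-1) ^+ 2 by apply: sumr_ge0 => j _; exact: sqr_ge0.
have -> : \sum_j (w j - L%:R^-1) ^+ 2 =
          \sum_j (w j ^+ 2 - 2 * L%:R^-1 * w j + L%:R^-1 ^+ 2).
  by apply: eq_bigr => j _; ring.
rewrite big_split /= sumrB -mulr_sumr w_sum sumr_const card_ord.
have -> : L%:R^-1 ^+ 2 *+ L = L%:R^-1 :> R by rewrite -mulr_natr expr2 -mulrA mulVf ?mulr1.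
lra.
Qed.

Lemma sum_dev_sq_simplex_le (L : nat) (y : 'I_L -> T -> R) :
  0 < mass -> (0 < L)%N ->
  (forall r, P r -> (forall j, 0 <= y j r) /\ \sum_j y j r = 1) ->
  \sum_j \sum_(r | P r) (y j r - mean (y j)) ^+ 2 <= mass * (1 - L%:R^-1).
Proof.
move=> m_gt0 L_gt0 y_simplex.
under eq_bigr => j _ do rewrite sum_dev_sq //.
rewrite sumrB exchange_big /= -mulr_sumr.
have second_moment : \sum_(r | P r) \sum_j y j r ^+ 2 <= mass.
  rewrite /mass; apply: ler_sum => r /y_simplex [y_ge0 y_sum].
  exact: sum_sq_simplex_le1.
have mean_sum : \sum_j mean (y j) = 1.
  rewrite /mean -mulr_sumr exchange_big /=.
  under eq_bigr => r /y_simplex [_ ->] do [].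
  by rewrite -/mass mulVf // gt_eqF.
have := invn_le_sum_sq L_gt0 mean_sum.
rewrite -(ler_pM2l m_gt0); lra.
Qed.

End Averages.

Section CenteredIndicators.
Variables (R : realFieldType) (T : finType) (P : pred T).
Variables (n : nat) (u : 'I_n -> pred T) (p q : R).

Local Notation mass := (mass R P).

Definition centered (i : 'I_n) (r : T) : R := (1 - p) - (u i r)%:R.

Definition mean_on (i : 'I_n) (y : T -> R) : R :=
  ((1 - p) * mass)^-1 * \sum_(r | P r) (u i r)%:R * y r.

Hypothesis sum_u : forall i, \sum_(r | P r) (u i r)%:R = (1 - p) * mass.
Hypothesis sum_uu : forall i k, i != k -> \sum_(r | P r) (u i r && u k r)%:R = q * mass.

Lemma sum_centered i : \sum_(r | P r) centered i r = 0.
Proof. by rewrite /centered sumrB sum_const_mass sum_u subrr. Qed.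

Lemma sum_centered_mul i k : \sum_(r | P r) centered i r * centered k r =
  (if i == k then p * (1 - p) else q - (1 - p) ^+ 2) * mass.
Proof.
have expand r : centered i r * centered k r =
   (1 - p) ^+ 2 - (1 - p) * (u i r)%:R - (1 - p) * (u k r)%:R + (u i r && u k r)%:R.
  by rewrite /centered -mulnb natrM; ring.
under eq_bigr => r _ do rewrite expand.
rewrite big_split /= !sumrB sum_const_mass -!mulr_sumr !sum_u.
have [<- | ik] := eqVneq i k; last by rewrite sum_uu //; ring.
under eq_bigr => r _ do rewrite andbb.
by rewrite sum_u; ring.
Qed.

(* The Gram matrix of the centered indicators is [(v - kappa) I + kappa J] with
   [kappa <= 0], so its largest eigenvalue is at most [v - kappa]. *)
Lemma sum_centered_comb_sq_le (a : 'I_n -> R) :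
  q - (1 - p) ^+ 2 <= 0 -> 0 <= mass ->
  \sum_(r | P r) (\sum_i a i * centered i r) ^+ 2 <=
  (p * (1 - p) - (q - (1 - p) ^+ 2)) * mass * \sum_i a i ^+ 2.
Proof.
move=> kappa_le0 m_ge0; set v := p * (1 - p); set kappa := q - (1 - p) ^+ 2.
have gram : \sum_(r | P r) (\sum_i a i * centered i r) ^+ 2 =
    \sum_i \sum_k a i * a k * (\sum_(r | P r) centered i r * centered k r).
  under eq_bigr => r _ do rewrite expr2 big_distrl /=.
  rewrite exchange_big /=; apply: eq_bigr => i _.
  under eq_bigr => r _ do rewrite mulr_sumr.
  rewrite exchange_big /=; apply: eq_bigr => k _.
  by rewrite mulr_sumr; apply: eq_bigr => r _; ring.
have row i : \sum_k a i * a k * (\sum_(r | P r) centered i r * centered k r) =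
    mass * (kappa * a i * \sum_k a k + (v - kappa) * a i ^+ 2).
  under eq_bigr => k _ do rewrite sum_centered_mul.
  rewrite (bigD1 i) //= eqxx.
  have -> : \sum_(k | k != i) a i * a k * ((if i == k then v else kappa) * mass) =
            \sum_(k | k != i) kappa * mass * a i * a k.
    by apply: eq_bigr => k ki; rewrite eq_sym (negbTE ki); ring.
  by rewrite [\sum_k a k](bigD1 i) //= -!mulr_sumr /v /kappa; ring.
rewrite gram; under eq_bigr => i _ do rewrite row.
set S := \sum_k a k.
have -> : \sum_i mass * (kappa * a i * S + (v - kappa) * a i ^+ 2) =
    mass * kappa * S ^+ 2 + (v - kappa) * mass * \sum_i a i ^+ 2.
  rewrite -mulr_sumr big_split /= -[\sum_i (v - kappa) * a i ^+ 2]mulr_sumr.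
  have -> : \sum_i kappa * a i * S = kappa * S * S by rewrite -mulr_suml -mulr_sumr.
  ring.
have : mass * kappa * S ^+ 2 <= 0 by rewrite mulr_le0_ge0 ?sqr_ge0 ?mulr_ge0_le0.
lra.
Qed.

Lemma mean_sub_mean_on (i : 'I_n) (y : T -> R) : 0 < mass -> p < 1 ->
  mean P y - mean_on i y = ((1 - p) * mass)^-1 * \sum_(r | P r) (y r - mean P y) * centered i r.
Proof.
move=> m_gt0 p_lt1.
have -> : \sum_(r | P r) (y r - mean P y) * centered i r =
    (1 - p) * \sum_(r | P r) y r - \sum_(r | P r) (u i r)%:R * y r
    - mean P y * \sum_(r | P r) centered i r.
  by rewrite !mulr_sumr -!sumrB; apply: eq_bigr => r _; rewrite /centered; ring.
rewrite sum_centered mulr0 subr0 sum_eq_mass_mean // /mean_on.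
by field; rewrite !gt_eqF // subr_gt0.
Qed.

Lemma sum_sq_mean_sub_mean_on_le (L : nat) (y : 'I_L -> T -> R) (lam : R) :
  0 < mass -> (0 < L)%N -> 0 < p -> p < 1 ->
  (forall r, P r -> (forall j, 0 <= y j r) /\ \sum_j y j r = 1) ->
  q - (1 - p) ^+ 2 <= 0 -> p * (1 - p) - (q - (1 - p) ^+ 2) <= lam ->
  \sum_i \sum_j (mean P (y j) - mean_on i (y j)) ^+ 2 <= lam * (1 - L%:R^-1) / (1 - p) ^+ 2.
Proof.
move=> m_gt0 L_gt0 p_gt0 p_lt1 y_simplex kappa_le0 lam_ge.
set M := p * (1 - p) - (q - (1 - p) ^+ 2) in lam_ge.
have M_gt0 : 0 < M by rewrite /M; nra.
set c := ((1 - p) * mass)^-1.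
have per_label j : \sum_i (mean P (y j) - mean_on i (y j)) ^+ 2 <=
    c ^+ 2 * (M * mass * \sum_(r | P r) (y j r - mean P (y j)) ^+ 2).
  under eq_bigr => i _ do rewrite mean_sub_mean_on // exprMn.
  rewrite -mulr_sumr ler_wpM2l ?sqr_ge0 //.
  apply: sum_sq_inner_le; first exact: mulr_gt0.
  by move=> a; apply: sum_centered_comb_sq_le => //; exact: ltW.
rewrite exchange_big /=; apply: le_trans (ler_sum _ (fun j _ => per_label j)) _.
rewrite -mulr_sumr -mulr_sumr.
apply: le_trans (ler_wpM2l (sqr_ge0 c) (ler_wpM2l (ltW (mulr_gt0 M_gt0 m_gt0))
  (sum_dev_sq_simplex_le m_gt0 L_gt0 y_simplex))) _.
have -> : c ^+ 2 * (M * mass * (mass * (1 - L%:R^-1))) = M * (1 - L%:R^-1) / (1 - p) ^+ 2.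
  rewrite /c; field.
  by rewrite (gt_eqF m_gt0) pnatr_eq0 -lt0n L_gt0 gt_eqF ?subr_gt0.
rewrite -!mulrA ler_wpM2r // mulr_ge0 ?invr_ge0 ?sqr_ge0 // subr_ge0.
by rewrite invf_le1 ?ltr0n // ler1n.
Qed.

End CenteredIndicators.

Definition without_replacement (s : bag_scheme) : bool :=
  if s is Subbagging then true else false.

Definition nbags (s : bag_scheme) (m K : nat) : nat :=
  if without_replacement s then (K ^_ m)%N else (K ^ m)%N.

Definition bag_of (s : bag_scheme) {m K : nat} (r : {ffun 'I_m -> 'I_K}) : bool :=
  without_replacement s ==> injectiveb r.

Section BagCounts.
Variables (R : realFieldType) (s : bag_scheme) (m K : nat).


Lemma sum1_bags : \sum_(r : {ffun 'I_m -> 'I_K} | bag_of s r) (1 : R) = (nbags s m K)%:R.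
Proof.
rewrite sum1_card /nbags /bag_of; congr _%:R.
case: (without_replacement s) => /=; last by rewrite card_ffun !card_ord.
have := card_inj_ffuns 'I_m 'I_K; rewrite !card_ord => <-.
by apply: eq_card => r; rewrite !inE.
Qed.

Lemma sum1_bags_avoid2 (i k : 'I_K) : i != k ->
  \sum_(r : {ffun 'I_m -> 'I_K} | bag_of s r) ([forall t, r t != i] && [forall t, r t != k])%:R =
  (nbags s m (K - 2))%:R :> R.
Proof.
move=> ik; have card_rest : #|[set: 'I_K] :\ i :\ k| = (K - 2)%N.
  have := cardsD1 k ([set: 'I_K] :\ i); have := cardsD1 i [set: 'I_K].
  rewrite !inE cardsT card_ord eq_sym ik /=.
  by move: #|_ :\ k| #|_ :\ i| => a b; lia.
set rest := _ :\ k in card_rest.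
have avoid_on (r : {ffun 'I_m -> 'I_K}) :
    [forall t, r t != i] && [forall t, r t != k] = (r \in ffun_on rest).
  apply/andP/ffun_onP => [[/forallP ri /forallP rk] t | r_on].
    by rewrite !inE ri rk.
  by split; apply/forallP => t; have := r_on t; rewrite !inE => /and3P[].
rewrite (eq_bigr (fun r => (r \in ffun_on rest)%:R * 1)); last first.
  by move=> r _; rewrite avoid_on mulr1.
rewrite sum_indicator sum1_card /nbags /bag_of; congr _%:R.
case: (without_replacement s) => /=.
  have := card_inj_ffuns_on 'I_m (mem rest); rewrite card_ord card_rest => <-.
  by apply: eq_card => r; rewrite !inE andbC.
have := card_ffun_on 'I_m (mem rest); rewrite card_ord card_rest -cardsE => <-.
by apply: eq_card => r; rewrite !inE.
Qed.

End BagCounts.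

Section PowerDifference.
Variables (R : realFieldType) (x y : R).
Hypotheses (y_ge0 : 0 <= y) (y_le_x : y <= x).

Lemma subrXX_le k : x ^+ k.+1 - y ^+ k.+1 <= k.+1%:R * x ^+ k * (x - y).
Proof.
elim: k => [|k IHk]; first by rewrite !expr1 expr0 mulr1 mul1r.
have x_ge0 : 0 <= x := le_trans y_ge0 y_le_x.
have -> : x ^+ k.+2 - y ^+ k.+2 = x * (x ^+ k.+1 - y ^+ k.+1) + y ^+ k.+1 * (x - y).
  by rewrite !exprS; ring.
have -> : k.+2%:R * x ^+ k.+1 * (x - y) =
    x * (k.+1%:R * x ^+ k * (x - y)) + x ^+ k.+1 * (x - y).
  by rewrite exprS -natr1 mulrS; ring.
apply: lerD; first by rewrite ler_wpM2l.
by rewrite ler_wpM2r ?subr_ge0 // lerXn2r // ?nnegrE.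
Qed.

Lemma subrXX_ge k : k.+1%:R * y ^+ k * (x - y) <= x ^+ k.+1 - y ^+ k.+1.
Proof.
elim: k => [|k IHk]; first by rewrite !expr1 expr0 mulr1 mul1r.
have -> : x ^+ k.+2 - y ^+ k.+2 = x * (x ^+ k.+1 - y ^+ k.+1) + y ^+ k.+1 * (x - y).
  by rewrite !exprS; ring.
have -> : k.+2%:R * y ^+ k.+1 * (x - y) =
    y * (k.+1%:R * y ^+ k * (x - y)) + y ^+ k.+1 * (x - y).
  by rewrite exprS -natr1 mulrS; ring.
have x_ge0 : 0 <= x := le_trans y_ge0 y_le_x.
rewrite lerD2r (@le_trans _ _ (x * (k.+1%:R * y ^+ k * (x - y)))) ?ler_wpM2l //.
by rewrite ler_wpM2r // !mulr_ge0 ?exprn_ge0 ?subr_ge0.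
Qed.

End PowerDifference.

(* For a bag drawn uniformly among [nbags s m n], [1 - p] and [q] are the probabilities
   that it avoids one, resp. two, given points; the last two conditions are the
   negative correlation of the avoidance events and the resulting Gram-norm bound. *)
Definition avoid_probs (R : realFieldType) (s : bag_scheme) (n m : nat) (p q : R) : Prop :=
  [/\ (nbags s m n.-1)%:R = (1 - p) * (nbags s m n)%:R,
      (nbags s m (n - 2))%:R = q * (nbags s m n)%:R,
      0 < p < 1,
      q - (1 - p) ^+ 2 <= 0 &
      p * (1 - p) - (q - (1 - p) ^+ 2) <= p * (1 - p) * (n%:R / (n%:R - 1))].

Lemma nbags_gt0 (s : bag_scheme) (n m : nat) :
  (s = Subbagging -> (m <= n - 1)%N) -> (0 < n)%N -> (0 < nbags s m n)%N.
Proof.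
rewrite /nbags; case: s => /= [_|/(_ erefl) m_le] n_gt0; first by rewrite expn_gt0 n_gt0.
by rewrite ffact_gt0; lia.
Qed.

Section Bootstrap.
Variables (R : realFieldType) (n k : nat).
Hypothesis n_ge2 : (2 <= n)%N.

Let nr : R := n%:R.
Let a : R := 1 - nr^-1.
Let b : R := (n - 2)%:R / nr.

Let nr_gt1 : 1 < nr. Proof. by rewrite ltr1n. Qed.

Let a2_sub_b : a ^+ 2 - b = nr^-2.
Proof. by rewrite /b natrB // /a; field; rewrite gt_eqF // (lt_trans ltr01 nr_gt1). Qed.

Let b_ge0 : 0 <= b. Proof. by rewrite divr_ge0 ?ler0n. Qed.

Let b_le_a2 : b <= a ^+ 2.
Proof. by rewrite -subr_ge0 a2_sub_b invr_ge0 exprn_ge0 // ltW // (lt_trans ltr01 nr_gt1). Qed.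

Let a_gt0 : 0 < a. Proof. by rewrite subr_gt0 invf_lt1 // (lt_trans ltr01 nr_gt1). Qed.

Let a_lt1 : a < 1. Proof. by rewrite /a gtrDl oppr_lt0 invr_gt0 (lt_trans ltr01 nr_gt1). Qed.

(* Mean-value bounds for [t ^+ k.+1] on [[b, a ^+ 2]] (above, with [a ^+ 2 - b = n^-2])
   and on [[a, 1]] (below, bounding [p]); they match because [a * n = n - 1]. *)
Let variance_bound : (a ^+ k.+1) ^+ 2 - b ^+ k.+1 <=
    (1 - a ^+ k.+1) * a ^+ k.+1 / (nr - 1).
Proof.
have H1 := subrXX_le b_ge0 b_le_a2 k.
have H2 := subrXX_ge (ltW a_gt0) (ltW a_lt1) k.
rewrite expr1n /a opprB addrCA subrr addr0 -/a in H2.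
rewrite a2_sub_b -exprM mulnC exprM in H1.
have n_gt1 := nr_gt1.
have a_n : k.+1%:R * (a ^+ 2) ^+ k * nr^-2 =
    (k.+1%:R * a ^+ k * nr^-1) * (a ^+ k.+1 / (nr - 1)).
  rewrite -exprM mulnC exprM expr2 [a ^+ k.+1]exprS /a.
  by field; rewrite !gt_eqF //; lra.
rewrite a_n in H1; apply: le_trans H1 _; rewrite -[leRHS]mulrA ler_wpM2r //.
by rewrite divr_ge0 ?exprn_ge0 ?ltW //; lra.
Qed.

Lemma bootstrap_avoid_probs :
  avoid_probs Bootstrap n k.+1 (1 - a ^+ k.+1) (b ^+ k.+1).
Proof.
have one_sub_p : 1 - (1 - a ^+ k.+1) = a ^+ k.+1 by rewrite opprB addrCA subrr addr0.
have n_gt1 := nr_gt1; have nr_neq0 : nr != 0 by rewrite gt_eqF //; lra.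
rewrite /avoid_probs one_sub_p /nbags /= !natrX -!exprMn; split.
- by rewrite -subn1 natrB ?(ltnW n_ge2) // /a; congr (_ ^+ _); field.
- by rewrite mulfVK.
- by rewrite subr_gt0 gtrBl exprn_gt0 // exprn_ilt1 ?ltW.
- by rewrite subr_le0 -exprM mulnC exprM lerXn2r ?nnegrE ?exprn_ge0 ?b_ge0 ?(ltW a_gt0).
- have := variance_bound; rewrite -/nr; set A := a ^+ k.+1.
  have -> : (1 - A) * A * (nr / (nr - 1)) = (1 - A) * A + (1 - A) * A / (nr - 1).
    by field; rewrite gt_eqF //; lra.
  lra.
Qed.

End Bootstrap.

Section Subbagging.
Variables (R : realFieldType) (n m : nat).
Hypotheses (n_ge2 : (2 <= n)%N) (m_ge1 : (1 <= m)%N) (m_le : (m <= n - 1)%N).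

Let nr : R := n%:R.
Let mr : R := m%:R.
Let Nf : R := (n ^_ m)%:R.

Let Nf_gt0 : 0 < Nf. Proof. by rewrite ltr0n ffact_gt0; lia. Qed.

Let ffactS_sub1 : (1 - mr / nr) * Nf = ((n - 1) ^_ m)%:R.
Proof.
have : (n ^_ m * (n - m) = n * (n - 1) ^_ m)%N by rewrite -ffactnSr ffactnS subn1.
move/(congr1 (fun k : nat => k%:R : R)); rewrite !natrM natrB; last lia.
rewrite -/nr -/mr -/Nf => eq_ffact.
have nr_gt0 : 0 < nr by rewrite ltr0n; lia.
apply: (mulfI (x := nr)); first by rewrite gt_eqF.
by rewrite -eq_ffact; field; rewrite gt_eqF.
Qed.

Let ffactS_sub2 : ((n - 2) ^_ m)%:R / Nf = (nr - mr) * (nr - mr - 1) / (nr * (nr - 1)).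
Proof.
have : (n ^_ m * ((n - m) * (n - m.+1)) = n * (n - 1) * (n - 2) ^_ m)%N.
  by rewrite mulnA -!ffactnSr !ffactnS -mulnA subn1 subn2.
move/(congr1 (fun k : nat => k%:R : R)); rewrite !natrM !natrB; try lia.
rewrite -[m.+1%:R]natr1 -/nr -/mr -/Nf => eq_ffact.
have nr_gt1 : 1 < nr by rewrite ltr1n.
apply: (mulfI (x := Nf * (nr * (nr - 1)))).
  by rewrite mulf_neq0 ?gt_eqF ?Nf_gt0 // mulr_gt0 //; lra.
have -> : Nf * (nr * (nr - 1)) * ((nr - mr) * (nr - mr - 1) / (nr * (nr - 1))) =
    Nf * ((nr - mr) * (nr - (mr + 1))).
  by field; rewrite !gt_eqF //; lra.
by rewrite eq_ffact; field; rewrite gt_eqF.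
Qed.

Lemma subbagging_avoid_probs :
  avoid_probs Subbagging n m (mr / nr) (((n - 2) ^_ m)%:R / Nf).
Proof.
have nr_gt1 : 1 < nr by rewrite ltr1n.
have mr_ge1 : 1 <= mr by rewrite ler1n.
have mr_le : mr + 1 <= nr by rewrite natr1 ler_nat; lia.
have p_ge0 : 0 <= mr / nr by rewrite divr_ge0 //; lra.
have one_sub_p_ge0 : 0 <= 1 - mr / nr by rewrite subr_ge0 ler_pdivrMr; lra.
have covariance : ((n - 2) ^_ m)%:R / Nf - (1 - mr / nr) ^+ 2 =
    - (mr / nr * (1 - mr / nr) / (nr - 1)).
  by rewrite ffactS_sub2; field; rewrite !gt_eqF //; lra.
rewrite /avoid_probs /nbags /= -subn1 ffactS_sub1 divfK ?gt_eqF //; split => //.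
- by rewrite divr_gt0 ?ltr_pdivrMr; lra.
- by rewrite covariance oppr_le0; apply: divr_ge0; [exact: mulr_ge0 | lra].
- rewrite covariance opprK.
  have -> : mr / nr * (1 - mr / nr) + mr / nr * (1 - mr / nr) / (nr - 1) =
      mr / nr * (1 - mr / nr) * (nr / (nr - 1)) by field; rewrite !gt_eqF //; lra.
  exact: lexx.
Qed.

End Subbagging.

Section InflatedArgmax.
Variables (R : realType) (L : nat) (eps : R).
Hypothesis eps_gt0 : 0 < eps.

Local Notation c := (eps / Num.sqrt 2).
Local Notation argmax := (argmax_eps eps).

Definition pos_part (y : R) : R := Num.max y 0.

Lemma pos_part_ge0 y : 0 <= pos_part y.
Proof. by rewrite /pos_part le_max lexx orbT. Qed.

Lemma pos_partE y : 0 <= y -> pos_part y = y.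
Proof. by move=> y_ge0; rewrite /pos_part max_l. Qed.

Lemma pos_part0 y : y <= 0 -> pos_part y = 0.
Proof. by move=> y_le0; rewrite /pos_part max_r. Qed.

Let c_gt0 : 0 < c. Proof. by rewrite divr_gt0 // sqrtr_gt0. Qed.

Let sqr_eps : eps ^+ 2 = 2 * c ^+ 2.
Proof. by rewrite expr_div_n sqr_sqrtr ?ler0n // mulrC mulfVK // pnatr_eq0. Qed.

Lemma argmax_eps_of_region (w z : 'I_L -> R) j :
  Rreg eps j z -> \sum_l (w l - z l) ^+ 2 < eps ^+ 2 -> argmax w j.
Proof.
move=> z_in dist_lt; rewrite /argmax_eps /=.
apply: le_lt_trans (_ : eucl_dist w z < eps).
  by apply: ge_inf; [exists 0 => _ [v _ ->]; exact: sqrtr_ge0 | exists z].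
by rewrite /eucl_dist -(ger0_norm (ltW eps_gt0)) -sqrtr_sqr ltr_sqrt // exprn_gt0.
Qed.

Definition cap_to_region (x : 'I_L -> R) j s : 'I_L -> R :=
  fun l => if l == j then x j + s else Num.min (x l) (x j + s - c).

Lemma cap_to_region_in (x : 'I_L -> R) j s : Rreg eps j (cap_to_region x j s).
Proof.
move=> l lj; rewrite /cap_to_region (negbTE lj) eqxx.
by case: (leP (x l) (x j + s - c)) => h; lra.
Qed.

Lemma sum_sq_sub_cap (x : 'I_L -> R) j s : c <= s ->
  \sum_l (x l - cap_to_region x j s l) ^+ 2 =
  s ^+ 2 + \sum_l pos_part (x l - (x j + s - c)) ^+ 2.
Proof.
move=> c_le_s; rewrite (bigD1 j) //= [in RHS](bigD1 j) //= /cap_to_region eqxx.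
rewrite pos_part0; last lra.
rewrite expr0n /= add0r; congr (_ + _); first by rewrite -sqrrN; congr (_ ^+ 2); ring.
apply: eq_bigr => l lj; rewrite (negbTE lj).
case: (leP (x l) (x j + s - c)) => h; first by rewrite subrr pos_part0 // subr_le0.
by rewrite pos_partE //; lra.
Qed.

Lemma notin_argmax_eps_le (x : 'I_L -> R) j s : ~ argmax x j -> c <= s ->
  eps ^+ 2 <= s ^+ 2 + \sum_l pos_part (x l - (x j + s - c)) ^+ 2.
Proof.
move=> j_out c_le_s; rewrite -(sum_sq_sub_cap x j c_le_s) leNgt; apply/negP => lt_eps.
exact: j_out (argmax_eps_of_region (@cap_to_region_in x j s) lt_eps).
Qed.

Lemma argmax_eps_max (x : 'I_L -> R) j : (forall l, x l <= x j) -> argmax x j.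
Proof.
move=> x_max; apply: (argmax_eps_of_region (@cap_to_region_in x j c)).
rewrite sum_sq_sub_cap // big1 => [|l _]; last by rewrite pos_part0 ?expr0n //; have := x_max l; lra.
by rewrite sqr_eps addr0 ltr_pMl ?exprn_gt0 // ltr1n.
Qed.

Lemma exists_max_notin_argmax_eps (x : 'I_L -> R) j : ~ argmax x j ->
  exists2 j0, ~ argmax x j0 & forall l, x j0 < x l -> argmax x l.
Proof.
move=> j_out; pose out k := ~~ (dist_set x (Rreg eps k) < eps).
have j_out' : out j by apply/negP.
case: (arg_maxP x j_out') => j0 /negP j0_out j0_max; exists j0 => // l x_lt.
by apply: contrapT => l_out; have := j0_max l (introN idP l_out); rewrite /= leNgt x_lt.
Qed.

Lemma argmax_eps_nonempty (x : 'I_L -> R) : (0 < L)%N -> exists j, argmax x j.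
Proof.
move=> L_gt0; case: (arg_maxP x (isT : predT (Ordinal L_gt0))) => j _ j_max.
by exists j; apply: argmax_eps_max => l; exact: j_max.
Qed.

Lemma pos_part_sep_le (wl vl al be : R) : (al < wl -> vl <= be) -> be <= al ->
  pos_part (wl - al) ^+ 2 + 2 * (al - be) * pos_part (wl - al)
    + (if al < wl then (al - be) ^+ 2 else 0) + pos_part (vl - al) ^+ 2 <= (wl - vl) ^+ 2.
Proof.
move=> v_le be_le; case: (ltP al wl) => w_cmp.
  have v_le_be := v_le w_cmp.
  rewrite pos_partE ?subr_ge0 ?(ltW w_cmp) // pos_part0 ?expr0n /= ?addr0; last lra.
  have -> : (wl - al) ^+ 2 + 2 * (al - be) * (wl - al) + (al - be) ^+ 2 = (wl - al + (al - be)) ^+ 2.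
    by ring.
  by rewrite lerXn2r ?nnegrE //; lra.
rewrite pos_part0 ?expr0n /= ?mulr0 ?add0r ?addr0; last lra.
case: (leP vl al) => v_cmp; first by rewrite pos_part0 ?expr0n ?sqr_ge0 //; lra.
by rewrite pos_partE -?[(wl - vl) ^+ 2]sqrrN ?opprB ?lerXn2r ?nnegrE //; lra.
Qed.

(* With [g = al - be]: summing [pos_part_sep_le] gives [A2 + 2 g A1 + g^2 + B2], where
   [A2 >= c^2] and [A1 >= c] by the first bound, [B2 >= eps^2 - (c + g)^2] by the
   second; since [eps^2 = 2 c^2] the total is at least [eps^2]. *)
Lemma eps_le_sum_sq_sub (w v : 'I_L -> R) (al be : R) :
  (forall l, al < w l -> v l <= be) -> be <= al ->
  eps ^+ 2 <= c ^+ 2 + \sum_l pos_part (w l - al) ^+ 2 ->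
  eps ^+ 2 <= (c + (al - be)) ^+ 2 + \sum_l pos_part (v l - al) ^+ 2 ->
  eps ^+ 2 <= \sum_l (w l - v l) ^+ 2.
Proof.
move=> v_le be_le w_far v_far; set g := al - be in v_far *.
have eps2 := sqr_eps; have c_pos := c_gt0.
have g_ge0 : 0 <= g by rewrite subr_ge0.
set A1 := \sum_l pos_part (w l - al).
set A2 := \sum_l pos_part (w l - al) ^+ 2 in w_far.
set B2 := \sum_l pos_part (v l - al) ^+ 2 in v_far.
set Tg := \sum_l (if al < w l then g ^+ 2 else 0).
have sum_le : A2 + 2 * g * A1 + Tg + B2 <= \sum_l (w l - v l) ^+ 2.
  rewrite /A2 /A1 /Tg /B2 mulr_sumr -!big_split /=.
  by apply: ler_sum => l _; apply: pos_part_sep_le => //; exact: v_le.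
have A2_ge : c ^+ 2 <= A2 by lra.
have A1_ge0 : 0 <= A1 by apply: sumr_ge0 => l _; exact: pos_part_ge0.
have A1_ge : c <= A1.
  rewrite -(@ler_pXn2r _ 2) ?nnegrE ?(ltW c_pos) //.
  by apply: le_trans A2_ge (sum_sq_le_sqr_sum _) => l; exact: pos_part_ge0.
have [l0 w_l0] : exists l, al < w l.
  apply/not_existsP => w_le; suff : A2 = 0 by have := exprn_gt0 2 c_pos; lra.
  rewrite /A2 big1 // => l _; rewrite pos_part0 ?expr0n // subr_le0.
  by move: (w_le l) => /negP; rewrite -leNgt.
have Tg_ge : g ^+ 2 <= Tg.
  rewrite /Tg (bigD1 l0) //= w_l0 lerDl sumr_ge0 // => l _.
  by case: ifP => _ //; rewrite sqr_ge0.
have : g * c <= g * A1 by rewrite ler_wpM2l.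
nra.
Qed.

Lemma eps_le_sum_sq_sub_of_disjoint (w v : 'I_L -> R) j0 j1 :
  (forall l, argmax w l -> ~ argmax v l) ->
  ~ argmax w j0 -> (forall l, w j0 < w l -> argmax w l) ->
  ~ argmax v j1 -> (forall l, v j1 < v l -> argmax v l) ->
  v j1 <= w j0 -> eps ^+ 2 <= \sum_l (w l - v l) ^+ 2.
Proof.
move=> disj j0_out j0_max j1_out j1_max le_j1_j0.
have v_le l : w j0 < w l -> v l <= v j1.
  move=> /j0_max /disj l_out; rewrite leNgt; apply/negP => /j1_max; exact: l_out.
apply: (eps_le_sum_sq_sub v_le le_j1_j0).
  by have := notin_argmax_eps_le j0_out (lexx c); under eq_bigr => l _ do rewrite addrK.
have shift : v j1 + (c + (w j0 - v j1)) - c = w j0 by ring.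
have := @notin_argmax_eps_le v j1 (c + (w j0 - v j1)) j1_out.
by under eq_bigr => l _ do rewrite shift; apply; lra.
Qed.

Lemma argmax_eps_meet (w v : 'I_L -> R) : (0 < L)%N ->
  \sum_l (w l - v l) ^+ 2 < eps ^+ 2 -> exists j, argmax w j /\ argmax v j.
Proof.
move=> L_gt0 near; apply: contrapT => no_meet.
have disj l : argmax w l -> ~ argmax v l by move=> wl vl; apply: no_meet; exists l.
have disj' l : argmax v l -> ~ argmax w l by move=> vl /disj.
have [jw /disj jw_out] := argmax_eps_nonempty w L_gt0.
have [jv /disj' jv_out] := argmax_eps_nonempty v L_gt0.
have [j0 j0_out j0_max] := exists_max_notin_argmax_eps jv_out.
have [j1 j1_out j1_max] := exists_max_notin_argmax_eps jw_out.
suff : eps ^+ 2 <= \sum_l (w l - v l) ^+ 2 by rewrite leNgt near.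
have [le_j1_j0 | le_j0_j1] := leP (v j1) (w j0).
  exact: eps_le_sum_sq_sub_of_disjoint disj j0_out j0_max j1_out j1_max le_j1_j0.
under eq_bigr => l _ do rewrite -sqrrN opprB.
exact: eps_le_sum_sq_sub_of_disjoint disj' j1_out j1_max j0_out j0_max (ltW le_j0_j1).
Qed.

End InflatedArgmax.

Section RemoveAt.
Variables (X : Type) (L m : nat) (D : dataset X L) (i : nat).

Local Notation N := (size D).
Local Notation D' := (remove_at D i).

Lemma size_remove_at : (i < N)%N -> size D' = N.-1.
Proof. by move=> i_lt; rewrite /remove_at size_cat (size_takel (ltnW i_lt)) size_drop; lia. Qed.

Lemma remove_at_oversize : (N <= i)%N -> D' = D.
Proof. by move=> i_ge; rewrite /remove_at take_oversize // drop_oversize ?cats0 //; lia. Qed.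

Lemma nth_remove_at x0 k : (i < N)%N -> nth x0 D' k = nth x0 D (bump i k).
Proof.
move=> i_lt; rewrite /remove_at nth_cat (size_takel (ltnW i_lt)) /bump.
case: (ltnP k i) => [k_lt_i | i_le_k]; first by rewrite nth_take // leqNgt k_lt_i.
by rewrite nth_drop add1n; congr nth; lia.
Qed.

Lemma bump_lt (k : 'I_(size D')) : (bump i k < N)%N.
Proof.
have : (k < size D')%N := ltn_ord k; move: (val k) => {}k; rewrite /bump.
have [i_lt | i_ge] := ltnP i N.
  by rewrite size_remove_at //; case: (i <= k)%N; lia.
by rewrite remove_at_oversize //; case: leqP; lia.
Qed.

Definition bump_ord (k : 'I_(size D')) : 'I_N := Ordinal (bump_lt k).

Definition bump_bag (r : {ffun 'I_m -> 'I_(size D')}) : {ffun 'I_m -> 'I_N} :=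
  [ffun t => bump_ord (r t)].

Definition avoids (r : {ffun 'I_m -> 'I_N}) : bool := [forall t, (r t : nat) != i].

Lemma bump_ord_inj : injective bump_ord.
Proof.
by move=> a b /(congr1 val) /= eq_ab; apply: val_inj => /=; rewrite -(bumpK i a) eq_ab bumpK.
Qed.

Lemma avoids_bump_bag r : avoids (bump_bag r).
Proof. by apply/forallP => t; rewrite ffunE /= eq_sym neq_bump. Qed.

Lemma injectiveb_bump_bag r : injectiveb (bump_bag r) = injectiveb r.
Proof.
apply/injectiveP/injectiveP => r_inj a b eq_ab; first by apply: r_inj; rewrite !ffunE eq_ab.
by apply/r_inj/bump_ord_inj; move: eq_ab; rewrite !ffunE.
Qed.

Lemma subsample_remove_at (r : {ffun 'I_m -> 'I_(size D')}) :
  (i < N)%N -> subsample r = subsample (bump_bag r).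
Proof.
move=> i_lt; rewrite /subsample; apply: eq_map => t; rewrite ffunE.
set y := tnth (in_tuple D) (bump_ord (r t)).
by rewrite (tnth_nth y) /= nth_remove_at // [RHS](tnth_nth y).
Qed.

(* [1 < N] only provides a default index of [D'] for the inverse of [bump_bag]. *)
Lemma reindex_avoids (R : realType) (s : bag_scheme) (F : {ffun 'I_m -> 'I_N} -> R) :
  (i < N)%N -> (1 < N)%N ->
  \sum_(r | bag_of s r && avoids r) F r = \sum_(r | bag_of s r) F (bump_bag r).
Proof.
move=> i_lt N_gt1.
have D'_gt0 : (0 < size D')%N by rewrite size_remove_at //; lia.
pose unbump_ord (y : 'I_N) : 'I_(size D') := insubd (Ordinal D'_gt0) (unbump i y).
have unbump_ordK (y : 'I_N) : (y : nat) != i -> bump_ord (unbump_ord y) = y.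
  move=> y_neq; apply: val_inj; rewrite /= /unbump_ord val_insubd.
  have -> : (unbump i y < size D')%N.
    by have := ltn_ord y; rewrite size_remove_at // /unbump; case: (ltnP i y) => /=; lia.
  by rewrite unbumpK // inE.
pose unbump_bag (r : {ffun 'I_m -> 'I_N}) := [ffun t => unbump_ord (r t)].
rewrite (reindex_onto bump_bag unbump_bag) => [|r /andP[_ /forallP r_avoids]]; last first.
  by apply/ffunP => t; rewrite !ffunE unbump_ordK.
apply: eq_bigl => r; rewrite /bag_of injectiveb_bump_bag avoids_bump_bag andbT.
have -> : unbump_bag (bump_bag r) = r.
  apply/ffunP => t; apply: val_inj; rewrite !ffunE /unbump_ord val_insubd /= bumpK.
  by rewrite ltn_ord.
by rewrite eqxx andbT.
Qed.

End RemoveAt.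

Lemma bagged_mean (R : realType) (X : Type) (L : nat) (s : bag_scheme)
    (A : dataset X L -> X -> 'I_L -> R) (m : nat) (D : dataset X L) (x : X) j :
  bagged s A m D x j = mean (bag_of s) (fun r : {ffun 'I_m -> 'I_(size D)} => A (subsample r) x j).
Proof.
rewrite /bagged /mean /mass sum1_bags /nbags; case: s => /=; first by rewrite natrX.
by rewrite -(sum1_bags R Subbagging) sum1_card.
Qed.

Lemma sum_sq_bagged_remove_at_le (R : realType) (X : Type) (L : nat) (s : bag_scheme)
    (A : dataset X L -> X -> 'I_L -> R) (m : nat) (D : dataset X L) (x : X) (p q : R) :
  (0 < L)%N -> (forall D x, in_simplex (A D x)) -> (1 < size D)%N ->
  (0 < nbags s m (size D))%N -> avoid_probs s (size D) m p q ->
  \sum_(i < size D) \sum_j (bagged s A m D x j - bagged s A m (remove_at D i) x j) ^+ 2 <=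
  p / (1 - p) * ((size D)%:R / ((size D)%:R - 1)) * (1 - L%:R^-1).
Proof.
move=> L_gt0 A_simplex size_gt1 nbags_gt0 [bags_avoid1 bags_avoid2 /andP[p_gt0 p_lt1] kappa_le0 M_le].
pose P : pred {ffun 'I_m -> 'I_(size D)} := bag_of s.
pose u (i : 'I_(size D)) : pred {ffun 'I_m -> 'I_(size D)} := avoids i.
pose y j (r : {ffun 'I_m -> 'I_(size D)}) := A (subsample r) x j.
have mass_eq : mass R P = (nbags s m (size D))%:R by rewrite /mass sum1_bags.
have mass_gt0 : 0 < mass R P by rewrite mass_eq ltr0n.
have sum_avoid (i : 'I_(size D)) (F : {ffun 'I_m -> 'I_(size D)} -> R) :
    \sum_(r | P r) (u i r)%:R * F r =
    \sum_(r : {ffun 'I_m -> 'I_(size (remove_at D i))} | bag_of s r) F (bump_bag r).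
  by rewrite sum_indicator reindex_avoids.
have mass_remove_at (i : 'I_(size D)) :
    mass R (@bag_of s m (size (remove_at D i))) = (1 - p) * mass R P.
  by rewrite mass_eq /mass sum1_bags size_remove_at // bags_avoid1.
have sum_u i : \sum_(r | P r) (u i r)%:R = (1 - p) * mass R P.
  rewrite -(mass_remove_at i) /mass -(sum_avoid i (fun _ => 1)).
  by apply: eq_bigr => r _; rewrite mulr1.
have sum_uu i k : i != k -> \sum_(r | P r) (u i r && u k r)%:R = q * mass R P.
  by move=> ik; rewrite mass_eq -bags_avoid2 -(sum1_bags_avoid2 R s m ik).
have bagged_remove_at (i : 'I_(size D)) j :
    bagged s A m (remove_at D i) x j = mean_on P u p i (y j).
  rewrite bagged_mean /mean_on /mean mass_remove_at sum_avoid; congr (_ * _).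
  by apply: eq_bigr => r _; rewrite /y subsample_remove_at.
have bagged_D j : bagged s A m D x j = mean P (y j) by exact: bagged_mean.
under eq_bigr => i _ do (under eq_bigr => j _ do rewrite bagged_remove_at bagged_D).
have y_simplex r : P r -> (forall j, 0 <= y j r) /\ \sum_j y j r = 1 by move=> _; exact: A_simplex.
have n_gt1 : 1 < (size D)%:R :> R by rewrite ltr1n.
set lam := p * (1 - p) * _ in M_le.
have -> : p / (1 - p) * ((size D)%:R / ((size D)%:R - 1)) * (1 - L%:R^-1) =
    lam * (1 - L%:R^-1) / (1 - p) ^+ 2.
  by rewrite /lam; field; rewrite pnatr_eq0 -lt0n L_gt0 !subr_eq0 (gt_eqF n_gt1) (gt_eqF p_lt1).
exact: (sum_sq_mean_sub_mean_on_le sum_u sum_uu mass_gt0 L_gt0 p_gt0 p_lt1 y_simplex kappa_le0 M_le).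
Qed.

Lemma avoid_probs_p_nm (R : realType) (s : bag_scheme) (n m : nat) :
  (2 <= n)%N -> (1 <= m)%N -> (s = Subbagging -> (m <= n - 1)%N) ->
  exists q : R, avoid_probs s n m (p_nm R s n m) q.
Proof.
move=> n_ge2 m_ge1; case: s => [_ | /(_ erefl) m_le].
  by case: m m_ge1 => // k _; eexists; exact: bootstrap_avoid_probs.
by eexists; exact: subbagging_avoid_probs.
Qed.


Theorem theorem1 (R : realType) (X : Type) (L n m : nat) (eps : R)
  (s : bag_scheme) (A : dataset X L -> X -> 'I_L -> R) :
  (2 <= n)%N -> (1 <= m)%N ->
  (s = Subbagging -> (m <= n - 1)%N) ->
  0 < eps ->
  (forall (D : dataset X L) (x : X), in_simplex (A D x)) ->
  selection_stable (fun D x => argmax_eps eps (bagged s A m D x))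
    (eps ^- 2 * ((1 - (L%:R)^-1) / (n%:R - 1)) *
       (p_nm R s n m / (1 - p_nm R s n m))) n.
Proof.
move=> n_ge2 m_ge1 m_le eps_gt0 A_simplex D size_D x.
have L_gt0 := in_simplex_dim_gt0 (A_simplex D x).
have [q probs] := avoid_probs_p_nm R n_ge2 m_ge1 m_le.
have nbags_gt0 := nbags_gt0 m_le (ltnW n_ge2).
subst n; set p := p_nm R s (size D) m in probs *.
pose dev (i : 'I_(size D)) :=
  \sum_j (bagged s A m D x j - bagged s A m (remove_at D i) x j) ^+ 2.
set B := [set i : 'I_(size D) | _].
have unstable i : i \in B -> eps ^+ 2 <= dev i.
  rewrite inE => /asboolP no_meet; rewrite leNgt; apply/negP => near.
  exact/no_meet/(argmax_eps_meet eps_gt0 L_gt0 near).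
have dev_ge0 i : 0 <= dev i by apply: sumr_ge0 => j _; exact: sqr_ge0.
have := card_mul_le_sum dev_ge0 unstable.
move/le_trans/(_ (sum_sq_bagged_remove_at_le x L_gt0 A_simplex n_ge2 nbags_gt0 probs)).
have [_ _ /andP[_ p_lt1] _ _] := probs.
have n_gt1 : 1 < (size D)%:R :> R by rewrite ltr1n.
rewrite (_ : p / (1 - p) * _ * _ = (size D)%:R *
    (eps ^- 2 * ((1 - L%:R^-1) / ((size D)%:R - 1)) * (p / (1 - p))) * eps ^+ 2); last first.
  by field; rewrite (gt_eqF eps_gt0) pnatr_eq0 -lt0n L_gt0 !subr_eq0 (gt_eqF n_gt1) (gt_eqF p_lt1).
by rewrite ler_pM2r ?exprn_gt0 // ler_pdivrMl // (lt_trans ltr01 n_gt1).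
Qed.
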